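(* Let $(\mathcal{G},\kappa)$ be a reaction network with species $\mathcal{S}=\{S_1,\dots,S_n\}$ whose positive recurrent irreducible components are $\Gamma_l=\{x\in\mathbb{Z}^{\mathcal{S}}_{\ge0}\mid\sum_{i}x_i=l\}$, $l\in\mathcal{I}$, with stationary distributions $\pi_l$ that are strictly positive on $\Gamma_l$, where $\mathcal{I}=\mathbb{Z}_{\ge1}$. Then the following are equivalent: (1) $(\mathcal{G},\kappa)$ has product-form stationary distribution, i.e. there are functions $f_i:\mathbb{Z}_{\ge 0}\to\mathbb{R}_{>0}$ ($S_i\in\mathcal{S}$) with $\pi_l(x)=Z_l^{-1}\prod_i f_i(x_i)$ for all $l\in\mathcal{I}$, $x\in\Gamma_l$, where $Z_l=\sum_{x\in\Gamma_l}\prod_if_i(x_i)$; (2) (a) for all $i$ with $i,i+1\in\mathcal{I}$, all $j,k$, and all $x,x+e_j-e_k\in\Gamma_i$, $y,y+e_j-e_k\in\Gamma_{i+1}$ with $x_j=y_j$, $x_k=y_k$: $\pi_i(x+e_j-e_k)\pi_{i+1}(y)=\pi_{i+1}(y+e_j-e_k)\pi_i(x)$; and (b) for all $i$ with $i,i+1,i+2\in\mathcal{I}$, all $j,k$, and all $x,z\in\Gamma_i$, $x+e_j,y,z+e_k,w\in\Gamma_{i+1}$, $y+e_j,w+e_k\in\Gamma_{i+2}$ with $x_j=y_j$ and $z_k=w_k$: $\pi_{i+1}(x+e_j)\pi_{i+1}(y)\pi_{i+2}(w+e_k)\pi_i(z)=\pi_{i+1}(z+e_k)\pi_{i+1}(w)\pi_{i+2}(y+e_j)\pi_i(x)$.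 Moreover, if instead $\mathcal{I}=\mathbb{Z}_{\ge q}$ for some $q\ge2$ (all other hypotheses unchanged), then (1) implies (2).
   Context: A reaction network $\mathcal{G}$ with rates $\kappa$ has a continuous-time Markov chain on $\mathbb{Z}^n_{\ge0}$; an irreducible component is a nonempty set $\Gamma$ such that for $x\in\Gamma$, $u$ is reachable from $x$ iff $u\in\Gamma$; on a positive recurrent irreducible component the stationary distribution is unique. $e_i$ denotes the $i$-th standard basis vector. *)

From HB Require Import structures.
From mathcomp Require Import all_boot all_order all_algebra.
From mathcomp Require Import reals.
Set Implicit Arguments. Unset Strict Implicit. Unset Printing Implicit Defensive.
Import Order.TTheory GRing.Theory Num.Theory.
Local Open Scope ring_scope.

Notation state n := 'rV[int]_n.

Definition evec (n : nat) (j : 'I_n) : state n := delta_mx 0 j.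

Definition nonneg (n : nat) (x : state n) : bool := [forall i, 0 <= x 0 i].

Definition inGamma (n l : nat) (x : state n) : bool :=
  nonneg x && (\sum_i x 0 i == l%:Z).

(* sum of F over the finite set Gamma_l, enumerated via {ffun 'I_n -> 'I_l.+1} *)
Definition gsum (R : realType) (n l : nat) (F : state n -> R) : R :=
  \sum_(x : {ffun 'I_n -> 'I_l.+1} | (\sum_i (x i : nat) == l)%N)
     F (\row_i ((x i : nat)%:Z)).

Definition reaction (R : realType) (n : nat) :=
  ('rV[nat]_n * 'rV[nat]_n * R)%type.

Definition rsrc (R : realType) n (r : reaction R n) := r.1.1.
Definition rtgt (R : realType) n (r : reaction R n) := r.1.2.
Definition rrate (R : realType) n (r : reaction R n) := r.2.

Definition zeta (R : realType) n (r : reaction R n) : state n :=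
  map_mx (fun k : nat => k%:Z) (rtgt r) - map_mx (fun k : nat => k%:Z) (rsrc r).

(* stochastic mass-action intensity: kappa * prod_i x_i!/(x_i - y_i)! (0 off Z^n_{>=0}) *)
Definition lam (R : realType) n (r : reaction R n) (x : state n) : R :=
  if nonneg x then rrate r * \prod_i ((absz (x 0 i)) ^_ (rsrc r 0 i))%:R else 0.

Definition step (R : realType) n (G : seq (reaction R n)) (x u : state n) : Prop :=
  exists2 r, r \in G & 0 < lam r x /\ u = x + zeta r.

Inductive reach (R : realType) n (G : seq (reaction R n)) : state n -> state n -> Prop :=
  | reach_refl x : reach G x x
  | reach_step x y u : step G x y -> reach G y u -> reach G x u.

Definition network (R : realType) n (G : seq (reaction R n)) : Prop :=
  forall r, r \in G -> 0 < rrate r.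

Definition irred_component (R : realType) n (G : seq (reaction R n)) (Gam : state n -> bool) : Prop :=
  (exists x, Gam x) /\ forall x, Gam x -> forall u, reach G x u <-> Gam u.

(* pi is a stationary distribution of the CTMC on the (finite) component Gamma_l,
   extended by zero outside Gamma_l: probability + global balance pi Q = 0. *)
Definition stationary_on (R : realType) n (G : seq (reaction R n)) (l : nat) (pi : state n -> R) : Prop :=
  [/\ forall x, 0 <= pi x,
      forall x, ~~ inGamma l x -> pi x = 0,
      gsum l pi = 1 &
      forall x, inGamma l x ->
        \sum_(r <- G) pi (x - zeta r) * lam r (x - zeta r)
        = pi x * \sum_(r <- G) lam r x].

(* standing hypotheses: for each l in I, Gamma_l is a (positive recurrent, being finite
   and closed) irreducible component with stationary distribution pi l, strictly
   positive on Gamma_l *)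
Definition setting (R : realType) n (G : seq (reaction R n)) (I : pred nat) (pi : nat -> state n -> R) : Prop :=
  network G /\
  forall l, I l ->
    [/\ irred_component G (inGamma l),
        stationary_on G l (pi l) &
        forall x, inGamma l x -> 0 < pi l x].

Definition product_form (R : realType) n (I : pred nat) (pi : nat -> state n -> R) : Prop :=
  exists f : 'I_n -> nat -> R,
    (forall i m, 0 < f i m) /\
    forall l, I l -> forall x, inGamma l x ->
      pi l x = (gsum l (fun y => \prod_i f i (absz (y 0 i))))^-1
               * \prod_i f i (absz (x 0 i)).

Definition cond2a (R : realType) n (I : pred nat) (pi : nat -> state n -> R) : Prop :=
  forall i, I i -> I i.+1 -> forall (j k : 'I_n) (x y : state n),
    inGamma i x -> inGamma i (x + evec j - evec k) ->
    inGamma i.+1 y -> inGamma i.+1 (y + evec j - evec k) ->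
    x 0 j = y 0 j -> x 0 k = y 0 k ->
    pi i (x + evec j - evec k) * pi i.+1 y
    = pi i.+1 (y + evec j - evec k) * pi i x.

Definition cond2b (R : realType) n (I : pred nat) (pi : nat -> state n -> R) : Prop :=
  forall i, I i -> I i.+1 -> I i.+2 -> forall (j k : 'I_n) (x y z w : state n),
    inGamma i x -> inGamma i z ->
    inGamma i.+1 (x + evec j) -> inGamma i.+1 y ->
    inGamma i.+1 (z + evec k) -> inGamma i.+1 w ->
    inGamma i.+2 (y + evec j) -> inGamma i.+2 (w + evec k) ->
    x 0 j = y 0 j -> z 0 k = w 0 k ->
    pi i.+1 (x + evec j) * pi i.+1 y * pi i.+2 (w + evec k) * pi i z
    = pi i.+1 (z + evec k) * pi i.+1 w * pi i.+2 (y + evec j) * pi i x.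

From HB Require Import structures.
From mathcomp Require Import all_boot all_order all_algebra.
From mathcomp Require Import reals.
From mathcomp Require Import ring zify.
Set Implicit Arguments. Unset Strict Implicit. Unset Printing Implicit Defensive.
Import Order.TTheory GRing.Theory Num.Theory.
Local Open Scope ring_scope.

(* (1) => (2): under a product form both sides of (2a) and (2b) are the same
   product of the f_i, the normalising constants Z_l occurring equally often.
   (2) => (1): fix a species i0.  Iterating (2a) across levels, the ratio
   pi_l(x + e_i0 - e_j) / pi_l(x) depends only on j, u = x_i0 and b = x_j - 1, so
   it equals the ratio rho_j(u, b) read off on the edge {a e_i0 + b e_j}.  (2b)
   makes rho_j separable in (u, b), and (2a) on the edges makes its u-part
   independent of j, so rho_j(u, b) = h(u) rho_j(0, b).  These are the move ratios
   of the weight prod_i f_i(x_i) with f_i0 = prod h and f_j = prod rho_j(0, .)^-1;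
   as the moves x |-> x + e_i0 - e_j connect Gamma_l, pi_l is proportional to this
   weight on Gamma_l. *)

Section States.
Variable n : nat.
Implicit Types (l : nat) (x y : state n) (i j k : 'I_n).

Lemma evecE (r : 'I_1) j i : evec j r i = if i == j then 1 else 0.
Proof. by rewrite /evec mxE !ord1 eqxx /=; case: (i == j). Qed.

Lemma add_evecE x j i : (x + evec j) 0 i = x 0 i + (if i == j then 1 else 0).
Proof. by rewrite mxE evecE. Qed.

Lemma sub_evecE x j i : (x - evec j) 0 i = x 0 i - (if i == j then 1 else 0).
Proof. by rewrite 2!mxE evecE. Qed.

Lemma move_evecE x j k i : (x + evec j - evec k) 0 i =
  x 0 i + (if i == j then 1 else 0) - (if i == k then 1 else 0).
Proof. by rewrite sub_evecE add_evecE. Qed.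

Definition rsum x := \sum_i x 0 i.

Lemma rsumD x y : rsum (x + y) = rsum x + rsum y.
Proof. by rewrite /rsum -big_split; apply: eq_bigr => i _; rewrite mxE. Qed.

Lemma rsumN x : rsum (- x) = - rsum x.
Proof. by rewrite /rsum -sumrN; apply: eq_bigr => i _; rewrite mxE. Qed.

Lemma rsumZ c x : rsum (c *: x) = c * rsum x.
Proof. by rewrite /rsum mulr_sumr; apply: eq_bigr => i _; rewrite mxE. Qed.

Lemma rsum_evec j : rsum (evec j) = 1.
Proof.
rewrite /rsum (bigD1 j) //= evecE eqxx big1 ?addr0 // => i /negbTE.
by rewrite evecE => ->.
Qed.

Lemma ler_rsum x y : (forall i, x 0 i <= y 0 i) -> rsum x <= rsum y.
Proof. by move=> le_xy; apply: ler_sum => i _. Qed.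

Lemma entry_le_rsum x j : (forall i, 0 <= x 0 i) -> x 0 j <= rsum x.
Proof. by move=> x_ge0; rewrite /rsum (bigD1 j) //= lerDl sumr_ge0. Qed.

Lemma inGammaP l x :
  reflect ((forall i, 0 <= x 0 i) /\ rsum x = l%:Z) (inGamma l x).
Proof.
rewrite /inGamma /nonneg; apply: (iffP andP) => [[/forallP ? /eqP ?]|[? ?]].
  by [].
by split; [apply/forallP | apply/eqP].
Qed.

Lemma inGamma_scale_evec l j : inGamma l (l%:Z *: evec j).
Proof.
apply/inGammaP; split; last by rewrite rsumZ rsum_evec mulr1.
by move=> i; rewrite mxE evecE; case: (i == j); lia.
Qed.

Lemma inGamma_sub_evec l x j : inGamma l.+1 x -> 0 < x 0 j -> inGamma l (x - evec j).
Proof.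
move=> /inGammaP [x_ge0 sum_x] xj_gt0; apply/inGammaP; split.
  by move=> i; rewrite sub_evecE; have := x_ge0 i; case: eqVneq => [->|_]; lia.
by rewrite rsumD rsumN rsum_evec sum_x; lia.
Qed.

Lemma inGamma_move l x j k :
  inGamma l x -> 0 < x 0 k -> inGamma l (x + evec j - evec k).
Proof.
move=> /inGammaP [x_ge0 sum_x] xk_gt0; apply/inGammaP; split.
  move=> i; rewrite move_evecE; have := x_ge0 i.
  by case: (eqVneq i k) => [->|_]; rewrite ?eqxx; case: (_ == j); lia.
by rewrite rsumD rsumN rsumD !rsum_evec sum_x; lia.
Qed.

Lemma inGamma_le_eq l x y :
  inGamma l x -> inGamma l y -> (forall i, x 0 i <= y 0 i) -> x = y.
Proof.
move=> /inGammaP [_ sum_x] /inGammaP [_ sum_y] le_xy.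
have sum_diff : \sum_i (y 0 i - x 0 i) = 0.
  by rewrite sumrB -/(rsum y) -/(rsum x) sum_x sum_y subrr.
apply/rowP => i; apply/eqP; rewrite eq_sym -subr_eq0; apply/eqP.
by apply: (psumr_eq0P _ sum_diff) => // m _; rewrite subr_ge0.
Qed.

Lemma exists_lt_of_rsum_lt x y : rsum x < rsum y -> exists i, x 0 i < y 0 i.
Proof.
case: (pickP (fun i => x 0 i < y 0 i)) => [i ?|none]; first by exists i.
by rewrite ltNge ler_rsum // => i; rewrite leNgt none.
Qed.

Lemma inGamma_connect (T : Type) (phi : state n -> T) i0 l :
  (forall x j, inGamma l x -> j != i0 -> 0 < x 0 j ->
     phi (x + evec i0 - evec j) = phi x) ->
  forall x, inGamma l x -> phi x = phi (l%:Z *: evec i0).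
Proof.
move=> phi_move x xl.
have [d] : exists d, addn `|x 0 i0| d = l.
  move/inGammaP: (xl) => [x_ge0 sum_x]; exists (subn l `|x 0 i0|).
  by have := entry_le_rsum i0 x_ge0; have := x_ge0 i0; rewrite sum_x; lia.
elim: d x xl => [|d IH] x xl Ek; move/inGammaP: (xl) => [x_ge0 sum_x].
  congr phi; apply/esym/(inGamma_le_eq (inGamma_scale_evec _ _) xl) => i.
  by rewrite mxE evecE; case: eqVneq => [->|_]; have := x_ge0 i0; have := x_ge0 i; lia.
have [j lt_j] : exists j, (x 0 i0 *: evec i0) 0 j < x 0 j.
  apply: exists_lt_of_rsum_lt.
  by rewrite sum_x rsumZ rsum_evec; have := x_ge0 i0; lia.
move: lt_j; rewrite mxE evecE; case: eqVneq => [->|j_neq]; first by lia.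
rewrite mulr0 => xj_gt0.
rewrite -(phi_move x j) //; apply: IH; first exact: inGamma_move.
by rewrite move_evecE eqxx eq_sym (negbTE j_neq); have := x_ge0 i0; lia.
Qed.

End States.

Section CrossRatios.
Variable R : idomainType.

Lemma seq_proportional (A B : nat -> R) : (forall u, A u != 0) ->
  (forall u, A u * B u.+1 = A u.+1 * B u) -> forall u, A u * B 0%N = A 0%N * B u.
Proof.
move=> A_neq0 AB_step; elim=> [|u IH] //; apply: (mulIf (A_neq0 u)).
transitivity (A u.+1 * (A u * B 0%N)); first by ring.
by rewrite IH -mulrA [B u.+1 * _]mulrC AB_step; ring.
Qed.

Lemma grid_separable (q : nat -> nat -> R) : (forall u b, q u b != 0) ->
  (forall u b, q u.+1 b.+1 * q u b = q u.+1 b * q u b.+1) ->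
  forall u b, q u b * q 0%N 0%N = q u 0%N * q 0%N b.
Proof.
move=> q_neq0 q_step u b.
have q_col c : q 0%N c * q u c.+1 = q 0%N c.+1 * q u c.
  have := seq_proportional (q_neq0^~ c) (fun v => etrans (mulrC _ _) (q_step v c)) u.
  by move=> /= E; rewrite -E mulrC.
have := seq_proportional (q_neq0 0%N) q_col b.
by move=> /= E; rewrite [LHS]mulrC -E mulrC.
Qed.

End CrossRatios.

Section ProductWeight.
Variables (R : realType) (n : nat) (f : 'I_n -> nat -> R).
Implicit Types (x y d : state n) (i j k : 'I_n).

Definition weight x := \prod_i f i `|x 0 i|.

Lemma weight_gt0 x : (forall i m, 0 < f i m) -> 0 < weight x.
Proof. by move=> f_gt0; apply: prodr_gt0 => i _. Qed.

Lemma weight_shift x y d : (forall i, d 0 i != 0 -> x 0 i = y 0 i) ->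
  weight (x + d) * weight y = weight (y + d) * weight x.
Proof.
move=> xy_supp; rewrite /weight -!big_split /=; apply: eq_bigr => i _.
rewrite !mxE; case: (eqVneq (d 0 i) 0) => [->|/xy_supp -> //].
by rewrite !addr0 mulrC.
Qed.

Lemma weight_move x j k u v : j != k -> x 0 j = u%:Z -> x 0 k = v.+1%:Z ->
  weight (x + evec j - evec k) * (f j u * f k v.+1) = weight x * (f j u.+1 * f k v).
Proof.
move=> jk xj xk; rewrite /weight (bigD1 j) // (bigD1 k) 1?eq_sym //=.
rewrite [in RHS](bigD1 j) // [in RHS](bigD1 k) 1?eq_sym //=.
rewrite !move_evecE eqxx (negbTE jk) eq_sym (negbTE jk) xj xk.
under eq_bigr => i /andP[ij ik] do rewrite move_evecE (negbTE ij) (negbTE ik) addr0 subr0.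
rewrite eqxx.
have -> : absz (u%:Z + 1 - 0)%R = u.+1 by lia.
have -> : absz (v.+1%:Z + 0 - 1)%R = v by lia.
by rewrite /=; ring.
Qed.

End ProductWeight.

Lemma gsum_ext (R : realType) n l (F G : state n -> R) :
  (forall x, inGamma l x -> F x = G x) -> gsum l F = gsum l G.
Proof.
move=> FG; apply: eq_bigr => y sum_y; apply: FG; apply/inGammaP.
split=> [i|]; first by rewrite mxE.
rewrite /rsum (eq_bigr (fun i => (y i : nat)%:Z)) => [|i _]; last by rewrite mxE.
transitivity ((\sum_i (y i : nat))%N%:Z); last by rewrite (eqP sum_y).
by rewrite -natz natr_sum; apply: eq_bigr => i _; rewrite natz.
Qed.

Lemma product_form_of_proportional (R : realType) n (I : pred nat)
    (pi : nat -> state n -> R) (f : 'I_n -> nat -> R) :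
  (forall i m, 0 < f i m) -> (forall l, I l -> gsum l (pi l) = 1) ->
  (forall l, I l -> exists K, forall x, inGamma l x -> pi l x = K * weight f x) ->
  product_form I pi.
Proof.
move=> f_gt0 pi_sum1 pi_prop; exists f; split=> // l Il x xl.
have [K piE] := pi_prop l Il.
have sumE : 1 = K * gsum l (weight f).
  by rewrite -(pi_sum1 l Il) (gsum_ext piE) /gsum mulr_sumr.
have Z_neq0 : gsum l (weight f) != 0.
  by apply/eqP => Z0; move/eqP: sumE; rewrite Z0 mulr0 oner_eq0.
have KE : K = (gsum l (weight f))^-1.
  by apply: (mulIf Z_neq0); rewrite mulVf // sumE.
by rewrite piE // KE.
Qed.

Lemma product_form_cond2 (R : realType) n (I : pred nat) (pi : nat -> state n -> R) :
  product_form I pi -> cond2a I pi /\ cond2b I pi.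
Proof.
move=> [f [_ piE]].
have {}piE l : I l -> forall x, inGamma l x ->
    pi l x = (gsum l (weight f))^-1 * weight f x := piE l.
have evec_supp j (i : 'I_n) : evec j 0 i != 0 -> i = j.
  by rewrite evecE; case: (eqVneq i j) => // _; rewrite eqxx.
split.
  move=> i Ii Ii1 j k x y ? ? ? ? xj xk.
  rewrite !piE // mulrACA -!addrA weight_shift; first by ring.
  move=> m; rewrite !mxE eqxx /=.
  by case: (eqVneq m j) => [->|_] //; case: (eqVneq m k) => [->|_] //; rewrite subrr eqxx.
move=> i Ii Ii1 Ii2 j k x y z w ? ? ? ? ? ? ? ? xj zk.
rewrite !piE // [X in X * _ * _ = _]mulrACA [X in _ = X * _ * _]mulrACA.
rewrite (@weight_shift _ _ f x y (evec j)) => [|m /evec_supp -> //].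
rewrite (@weight_shift _ _ f z w (evec k)) => [|m /evec_supp -> //].
by ring.
Qed.

Section Cond2aLift.
Variables (R : realType) (n : nat) (pi : nat -> state n -> R).
Hypothesis pi_gt0 : forall l, (1 <= l)%N -> forall x, inGamma l x -> 0 < pi l x.
Hypothesis pi_cond2a : cond2a (fun l => (1 <= l)%N) pi.

Lemma cond2a_lift l l' j k (x y : state n) : (1 <= l)%N ->
  inGamma l x -> inGamma l' y -> (forall i, x 0 i <= y 0 i) ->
  x 0 j = y 0 j -> x 0 k = y 0 k -> 0 < x 0 k ->
  pi l (x + evec j - evec k) * pi l' y = pi l' (y + evec j - evec k) * pi l x.
Proof.
move=> l_gt0 xl yl' le_xy xj xk xk_gt0.
have [d ?] : exists d, l' = (l + d)%N.
  move: (xl) (yl') => /inGammaP[_ sum_x] /inGammaP[_ sum_y].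
  by have := ler_rsum le_xy; rewrite sum_x sum_y lez_nat => le_ll'; exists (l' - l)%N; lia.
subst l'; elim: d y yl' le_xy xj xk => [|d IH] y yl' le_xy xj xk.
  by rewrite addn0 in yl' *; rewrite -(inGamma_le_eq xl yl' le_xy) mulrC.
rewrite addnS in yl' *.
have [m lt_m] : exists m, x 0 m < y 0 m.
  move: (xl) (yl') => /inGammaP[_ sum_x] /inGammaP[_ sum_y].
  by apply: exists_lt_of_rsum_lt; rewrite sum_x sum_y; lia.
have [mj mk] : m != j /\ m != k.
  by split; apply: contraTneq lt_m => ->; rewrite ?xj ?xk ltxx.
have ym_gt0 : 0 < y 0 m.
  by move/inGammaP: xl => [x_ge0 _]; apply: le_lt_trans lt_m.
have y'l := inGamma_sub_evec yl' ym_gt0.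
have y'E i : m != i -> (y - evec m) 0 i = y 0 i.
  by move=> mi; rewrite sub_evecE eq_sym (negbTE mi) subr0.
have yk_gt0 : 0 < y 0 k by rewrite -xk.
have y'k_gt0 : 0 < (y - evec m) 0 k by rewrite y'E.
have le_xy' i : x 0 i <= (y - evec m) 0 i.
  by rewrite sub_evecE; case: eqVneq => [->|_]; [lia | rewrite subr0].
have IH' := IH _ y'l le_xy' (etrans xj (esym (y'E _ mj))) (etrans xk (esym (y'E _ mk))).
have ld_gt0 : (0 < l + d)%N by rewrite addn_gt0 l_gt0.
have step := pi_cond2a ld_gt0 isT y'l (inGamma_move j y'l y'k_gt0) yl'
  (inGamma_move j yl' yk_gt0) (y'E _ mj) (y'E _ mk).
have y'_neq0 : pi (l + d) (y - evec m) != 0 by rewrite gt_eqF ?pi_gt0.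
apply: (mulIf y'_neq0); rewrite mulrAC IH'.
transitivity (pi l x * (pi (l + d) (y - evec m + evec j - evec k) * pi (l + d).+1 y)).
  by ring.
by rewrite step; ring.
Qed.

End Cond2aLift.

Section EdgeRatios.
Variables (R : realType) (n : nat) (pi : nat -> state n -> R) (i0 : 'I_n).
Hypothesis pi_gt0 : forall l, (1 <= l)%N -> forall x, inGamma l x -> 0 < pi l x.
Hypothesis pi_cond2a : cond2a (fun l => (1 <= l)%N) pi.
Hypothesis pi_cond2b : cond2b (fun l => (1 <= l)%N) pi.
Implicit Types (j k : 'I_n) (a b u : nat) (x : state n).

Definition edge_pt j a b : state n := a%:Z *: evec i0 + b%:Z *: evec j.

Lemma edge_ptE j a b i : edge_pt j a b 0 i =
  a%:Z * (if i == i0 then 1 else 0) + b%:Z * (if i == j then 1 else 0).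
Proof. by rewrite /edge_pt !mxE eqxx /=; case: (i == i0); case: (i == j). Qed.

Lemma edge_pt_inGamma l j a b : (a + b)%N = l -> inGamma l (edge_pt j a b).
Proof.
move=> <-; apply/inGammaP; split.
  by move=> i; rewrite edge_ptE; case: (i == i0); case: (i == j); lia.
by rewrite /edge_pt rsumD !rsumZ !rsum_evec; lia.
Qed.

Local Ltac edge_pt_eq :=
  apply/rowP => i; rewrite ?add_evecE ?move_evecE !edge_ptE;
  repeat case: (_ == _); lia.

Lemma edge_pt_add0 j a b : edge_pt j a b + evec i0 = edge_pt j a.+1 b.
Proof. edge_pt_eq. Qed.

Lemma edge_pt_addj j a b : edge_pt j a b + evec j = edge_pt j a b.+1.
Proof. edge_pt_eq. Qed.

Lemma edge_pt_move j a b : edge_pt j a b.+1 + evec i0 - evec j = edge_pt j a.+1 b.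
Proof. edge_pt_eq. Qed.

Lemma edge_pt_swap j k a : edge_pt j a 1 + evec k - evec j = edge_pt k a 1.
Proof. edge_pt_eq. Qed.

Lemma edge_pt_vertex j k a : edge_pt j a 0 = edge_pt k a 0.
Proof. edge_pt_eq. Qed.

Definition pi_edge j a b := pi (a + b) (edge_pt j a b).

Lemma pi_edge_gt0 j a b : (0 < a + b)%N -> 0 < pi_edge j a b.
Proof. by move=> ab_gt0; apply: pi_gt0 => //; apply: edge_pt_inGamma. Qed.

Definition rho j u b := pi_edge j u.+1 b / pi_edge j u b.+1.

Lemma rho_gt0 j u b : 0 < rho j u b.
Proof. by rewrite divr_gt0 ?pi_edge_gt0 ?addnS. Qed.

Lemma rho_neq0 j u b : rho j u b != 0.
Proof. by rewrite gt_eqF ?rho_gt0. Qed.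

Lemma rho_step j u b : j != i0 ->
  rho j u.+1 b.+1 * rho j u b = rho j u.+1 b * rho j u b.+1.
Proof.
move=> ji0.
have E : pi_edge j u.+2 b * pi_edge j u.+1 b.+1 * pi_edge j u.+1 b.+2 * pi_edge j u b.+1
       = pi_edge j u b.+2 * pi_edge j u.+1 b.+1 * pi_edge j u.+2 b.+1 * pi_edge j u.+1 b.
  rewrite /pi_edge !addSn !addnS.
  have := @pi_cond2b (u + b).+1 isT isT isT i0 j (edge_pt j u.+1 b) (edge_pt j u.+1 b.+1)
    (edge_pt j u b.+1) (edge_pt j u.+1 b.+1).
  rewrite !edge_pt_add0 !edge_pt_addj; apply; try by apply: edge_pt_inGamma; lia.
    by rewrite !edge_ptE eqxx eq_sym (negbTE ji0).
  by rewrite !edge_ptE eqxx (negbTE ji0).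
have pi_edge_neq0 a c : pi_edge j a c.+1 != 0 by rewrite gt_eqF ?pi_edge_gt0 ?addnS.
rewrite /rho !mulf_div; apply/eqP; rewrite eqr_div ?mulf_neq0 //; apply/eqP.
transitivity (pi_edge j u b.+2 * pi_edge j u.+1 b.+1 *
              pi_edge j u.+2 b.+1 * pi_edge j u.+1 b); first by ring.
by rewrite -E; ring.
Qed.

Lemma rho_sep j u b : j != i0 -> rho j u b * rho j 0 0 = rho j u 0 * rho j 0 b.
Proof.
by move=> ji0; apply: grid_separable => [u' b'|u' b']; [exact: rho_neq0 | exact: rho_step].
Qed.

Lemma rho_indep j k u : j != i0 -> k != i0 ->
  rho j u 0 * rho k 0 0 = rho k u 0 * rho j 0 0.
Proof.
move=> ji0 ki0.
have step v : pi_edge k v 1 * pi_edge j v.+1 1 = pi_edge k v.+1 1 * pi_edge j v 1.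
  rewrite /pi_edge !addn1.
  have := @pi_cond2a v.+1 isT isT k j (edge_pt j v 1) (edge_pt j v.+1 1).
  rewrite !edge_pt_swap; apply; try by apply: edge_pt_inGamma; lia.
    by rewrite !edge_ptE (negbTE ki0); lia.
  by rewrite !edge_ptE (negbTE ji0); lia.
have pi_edge1_neq0 i v : pi_edge i v 1 != 0 by rewrite gt_eqF ?pi_edge_gt0 ?addn1.
have prop := seq_proportional (A := fun v => pi_edge k v 1) (B := fun v => pi_edge j v 1)
  (pi_edge1_neq0 k) step u.
rewrite /rho /pi_edge !(edge_pt_vertex j k) -!/(pi_edge _ _ _) !mulf_div.
apply/eqP; rewrite eqr_div ?mulf_neq0 //; apply/eqP.
rewrite /= in prop.
transitivity (pi_edge k u.+1 0 * pi_edge k 1 0 * (pi_edge k u 1 * pi_edge j 0 1)).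
  by ring.
by rewrite prop; ring.
Qed.

Lemma pi_moveE l j x u b : (1 <= l)%N -> j != i0 -> inGamma l x ->
  x 0 i0 = u%:Z -> x 0 j = b.+1%:Z -> pi l (x + evec i0 - evec j) = pi l x * rho j u b.
Proof.
move=> l_gt0 ji0 xl xu xj.
move/inGammaP: (xl) => [x_ge0 _].
have edge0 : edge_pt j u b.+1 0 i0 = x 0 i0.
  by rewrite edge_ptE eqxx eq_sym (negbTE ji0) xu; lia.
have edgej : edge_pt j u b.+1 0 j = x 0 j by rewrite edge_ptE eqxx (negbTE ji0) xj; lia.
have le_edge i : edge_pt j u b.+1 0 i <= x 0 i.
  case: (eqVneq i i0) => [->|ii0]; first by rewrite edge0.
  case: (eqVneq i j) => [->|ij]; first by rewrite edgej.
  by rewrite edge_ptE (negbTE ii0) (negbTE ij) !mulr0 addr0 x_ge0.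
have lvl_gt0 : (0 < u + b.+1)%N by rewrite addnS.
have edgej_gt0 : 0 < edge_pt j u b.+1 0 j by rewrite edgej xj.
have := @cond2a_lift R n pi pi_gt0 pi_cond2a (u + b.+1) l i0 j (edge_pt j u b.+1) x
  lvl_gt0 (edge_pt_inGamma j (erefl _)) xl le_edge edge0 edgej edgej_gt0.
rewrite edge_pt_move => E.
have edge_neq0 : pi_edge j u b.+1 != 0 by rewrite gt_eqF ?pi_edge_gt0.
apply: (mulIf edge_neq0); rewrite -[RHS]mulrA divfK // [RHS]mulrC.
by rewrite /pi_edge addSnnS E.
Qed.

(* Defaults to [i0] only when [i0] is the sole species, where [rho_split] is vacuous. *)
Definition ref_species := odflt i0 [pick k | k != i0].

Lemma ref_species_neq j : j != i0 -> ref_species != i0.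
Proof.
rewrite /ref_species; case: pickP => [k //|no_k] ji0.
by have := no_k j; rewrite ji0.
Qed.

Definition rho_ref u := rho ref_species u 0 / rho ref_species 0 0.

Lemma rho_split j u b : j != i0 -> rho j u b = rho_ref u * rho j 0 b.
Proof.
move=> ji0; have ri0 := ref_species_neq ji0.
apply: (mulIf (rho_neq0 j 0 0)); rewrite rho_sep //.
apply: (mulIf (rho_neq0 ref_species 0 0)).
transitivity (rho j u 0 * rho ref_species 0 0 * rho j 0 b); first by ring.
by rewrite rho_indep // /rho_ref; field; exact: rho_neq0.
Qed.

Definition pf_factor i m :=
  if i == i0 then \prod_(c < m) rho_ref c else (\prod_(c < m) rho i 0 c)^-1.

Lemma pf_factor_gt0 i m : 0 < pf_factor i m.
Proof.
rewrite /pf_factor; case: ifP => _; last rewrite invr_gt0; apply: prodr_gt0 => c _.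
  by rewrite divr_gt0 ?rho_gt0.
exact: rho_gt0.
Qed.

Lemma pf_factor_S0 u : pf_factor i0 u.+1 = pf_factor i0 u * rho_ref u.
Proof. by rewrite /pf_factor eqxx big_ord_recr. Qed.

Lemma pf_factor_Sj j b : j != i0 -> pf_factor j b.+1 = pf_factor j b / rho j 0 b.
Proof. by move=> ji0; rewrite /pf_factor (negbTE ji0) big_ord_recr invfM. Qed.

Lemma weight_pf_move j x u b : j != i0 -> x 0 i0 = u%:Z -> x 0 j = b.+1%:Z ->
  weight pf_factor (x + evec i0 - evec j) = weight pf_factor x * rho j u b.
Proof.
move=> ji0 xu xj.
have i0j : i0 != j by rewrite eq_sym.
have := @weight_move _ _ pf_factor x i0 j u b i0j xu xj.
have [f0_neq0 fj_neq0] : pf_factor i0 u != 0 /\ pf_factor j b != 0.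
  by split; rewrite gt_eqF ?pf_factor_gt0.
rewrite pf_factor_S0 pf_factor_Sj // (@rho_split j u b ji0) => E.
apply: (mulIf (_ : pf_factor i0 u * (pf_factor j b / rho j 0 b) != 0)).
  by rewrite mulf_neq0 ?mulf_neq0 ?invr_eq0 ?rho_neq0.
by rewrite E; field; rewrite rho_neq0.
Qed.

Lemma pi_prop_weight l : (1 <= l)%N ->
  exists K, forall x, inGamma l x -> pi l x = K * weight pf_factor x.
Proof.
move=> l_gt0; set top := l%:Z *: evec i0.
exists (pi l top / weight pf_factor top) => x xl.
have W_neq0 y : weight pf_factor y != 0.
  by rewrite gt_eqF ?weight_gt0 //; exact: pf_factor_gt0.
suff -> : pi l top / weight pf_factor top = pi l x / weight pf_factor x by rewrite divfK.
apply/esym/(@inGamma_connect n R (fun y => pi l y / weight pf_factor y) i0 l _ x xl).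
move=> y j yl ji0 yj_gt0; move/inGammaP: (yl) => [y_ge0 _].
have yu : y 0 i0 = `|y 0 i0|%:Z by have := y_ge0 i0; lia.
have yj : y 0 j = (`|y 0 j|.-1).+1%:Z by lia.
rewrite (pi_moveE l_gt0 ji0 yl yu yj) (weight_pf_move ji0 yu yj).
by rewrite invfM mulrACA divff ?rho_neq0 ?mulr1.
Qed.

End EdgeRatios.

Theorem theorem3p6 :
  (forall (R : realType) (n : nat) (G : seq (reaction R n)) (pi : nat -> 'rV[int]_n -> R),
      setting G (fun l => (1 <= l)%N) pi ->
      (product_form (fun l => (1 <= l)%N) pi <->
       (cond2a (fun l => (1 <= l)%N) pi /\ cond2b (fun l => (1 <= l)%N) pi)))
  /\
  (forall (R : realType) (n q : nat) (G : seq (reaction R n)) (pi : nat -> 'rV[int]_n -> R),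
      (2 <= q)%N ->
      setting G (fun l => (q <= l)%N) pi ->
      product_form (fun l => (q <= l)%N) pi ->
      cond2a (fun l => (q <= l)%N) pi /\ cond2b (fun l => (q <= l)%N) pi).
Proof.
split=> [R n G pi [_ pi_irred]|R n q G pi _ _]; last exact: product_form_cond2.
split=> [|[pi_cond2a pi_cond2b]]; first exact: product_form_cond2.
have pi_gt0 l : (1 <= l)%N -> forall x, inGamma l x -> 0 < pi l x.
  by move=> /pi_irred[].
have pi_sum1 l : (1 <= l)%N -> gsum l (pi l) = 1.
  by move=> /pi_irred[_ []].
case: n => [|n] in G pi pi_irred pi_cond2a pi_cond2b pi_gt0 pi_sum1 *.
  apply: (product_form_of_proportional (f := fun _ _ => 1)) => // l l_gt0.
  by exists 0 => x /inGammaP[_]; rewrite /rsum big_ord0; lia.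
have := product_form_of_proportional (pf_factor_gt0 ord0 pi_gt0) pi_sum1.
by apply => l l_gt0; exact: pi_prop_weight.
Qed.
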